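(* Fix $\beta>0$, $k\in\mathbb{N}$ and $0<t_0<t<\infty$. Let $(C_n)_{n\ge1}$ be the solution on $[t_0,t]$ of $$C_1\equiv1,\qquad \dot C_n=\frac{k+1}{k}(n-1)B\,C_n+\frac{n\Gamma}{2}\sum_{j=1}^{n-1}C_jC_{n-j}\quad(2\le n\le k),$$ $$\dot C_n=nB\,C_n+\frac{n\Gamma}{2}\sum_{j=1}^{n-1}C_jC_{n-j}\quad(n>k),\qquad C_n(t_0)=0\ (n\ge2)$$ (these are the coefficient equations of $\Theta_t=\Gamma(z^2\Theta^2)_z+B((z\Theta)_z-L_k)$, $\Theta(t_0,\cdot)=1$, with Lagrange multiplier $L_k=1+\sum_{j=1}^{k-1}(1-j/k)C_{j+1}z^j$), and set $\Theta(t,z)=\sum_{n\ge1}C_n(t)z^{n-1}$. Let $$\tau_k(t_0,t)=\int_{t_0}^t\Gamma(s)\exp\!\Big(\frac{k+1}{k}\int_s^tB(s')\,ds'\Big)ds .$$ Then for every $z\ge0$ with $e\,z\,\tau_k(t_0,t)<1$ the series converges and $$\Theta(t,z)\le\frac{-1}{\tau_k(t_0,t)\,z}\,W\!\left(-\tau_k(t_0,t)\,z\right).$$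
   Context: $g(s)=-\frac{s}{4\pi}\int_s^\infty K_0'''(r)\frac{r}{\sqrt{r^2-s^2}}dr$ for $s>0$ (a positive function), $K_0$ the modified Bessel function of the second kind of order $0$. $\Gamma(t)=\frac{\beta\pi}{4}t^2g(t)$ and $B(t)=\frac{\beta}{2}g(t)$. $W$ is the principal branch of the Lambert $W$ function, with $-W(-x)/x=\sum_{n\ge1}\frac{n^{n-1}}{n!}x^{n-1}$ for $0\le x\le1/e$ (value $1$ at $x=0$). *)

From Stdlib Require Import Reals Lra.
Open Scope R_scope.

Definition RInt_is (f : R -> R) (a b v : R) : Prop :=
  exists pr : Riemann_integrable f a b, RiemannInt pr = v.

Definition improper_int_a_oo (f : R -> R) (a l : R) : Prop :=
  forall eps, 0 < eps -> exists M, forall b, M < b ->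
    exists pr : Riemann_integrable f a b, Rabs (RiemannInt pr - l) < eps.

Definition improper_int_oa_oo (f : R -> R) (a l : R) : Prop :=
  forall eps, 0 < eps -> exists delta, 0 < delta /\ exists M, forall u b,
    a < u < a + delta -> M < b ->
    exists pr : Riemann_integrable f u b, Rabs (RiemannInt pr - l) < eps.

(* K_0, modified Bessel function of the second kind of order 0, on r > 0,
   via its standard integral representation K_0(r) = int_0^oo e^{-r cosh u} du. *)
Definition is_BesselK0 (K0 : R -> R) : Prop :=
  forall r, 0 < r -> improper_int_a_oo (fun u => exp (- r * cosh u)) 0 (K0 r).

(* g(s) = -(s/(4 pi)) int_s^oo K_0'''(r) r / sqrt(r^2 - s^2) dr, s > 0,
   where K3 is the third derivative of K_0. *)
Definition is_g (K3 g : R -> R) : Prop :=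
  forall s, 0 < s -> exists I,
    improper_int_oa_oo (fun r => K3 r * r / sqrt (r ^ 2 - s ^ 2)) s I /\
    g s = - (s / (4 * PI)) * I.

(* Principal branch of Lambert W: w = W(x) iff w >= -1 and w e^w = x. *)
Definition is_LambertW0 (x w : R) : Prop := -1 <= w /\ w * exp w = x.

(* coefficient of B in the equation for C_n *)
Definition lin_coef (k n : nat) : R :=
  if (n <=? k)%nat then (INR k + 1) / INR k * (INR n - 1) else INR n.

(* Proof outline.
   1. g > 0. The integral representation of K0 bounds its third differences
      by -c h^3 (c > 0 uniform on bounded sets); second differences being
      h^2 K0''(xi), K0'' decreases at a definite rate, so K0''' < 0 and the
      integral defining g is negative.
   2. With B = beta g / 2, Gamma = (pi/2) s^2 B and kappa = (k+1)/k, the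
      coefficient C_2 solves C_2' = kappa B C_2 + Gamma, C_2(t0) = 0; variation
      of constants gives C_2(t) = tau_k(t0,t) > 0.
   3. Since the linear coefficients satisfy 0 <= lin_coef k n <= kappa (n-1),
      the comparison principle gives 0 <= C_n <= b_n C_2^(n-1), where the tree
      coefficients b_n obey (n-1) b_n = (n/2) sum_j b_j b_(n-j).
   4. The partial sums T_K(x) of sum_m b_(m+1) x^m satisfy
      T_K(x) exp(-x T_K(x)) <= 1, whence x T_K(x) <= -W(-x) for e x < 1.
   Steps 3 and 4 bound the partial sums of Theta, which proves the theorem. *)

From Stdlib Require Import Reals Lra Lia Classical ClassicalEpsilon ZArith Wf_nat.
From Coquelicot Require Import Coquelicot.
Open Scope R_scope.

(** * Calculus toolkit *)

(** Fundamental theorem of calculus for a derivative that is merely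
    integrable: the Riemann sums built on mean-value points telescope. *)

Lemma sorted_last_ge (x0 : R) (l : list R) :
  sorted Rle (x0 :: l) -> x0 <= seq.last x0 l.
Proof.
  revert x0; induction l as [|y l IH]; intros x0 H; simpl; [lra|].
  destruct H as [H1 H2]. specialize (IH y H2). simpl in IH. lra.
Qed.

Lemma riemann_sum_telescope (F f : R -> R) a b (tag : R -> R -> R) :
  (forall x y, a <= x -> x <= y -> y <= b -> F y - F x = f (tag x y) * (y - x)) ->
  forall l x0, sorted Rle (x0 :: l) -> a <= x0 -> seq.last x0 l <= b ->
  Riemann_sum f (SF_seq_f2 tag (x0 :: l)) = F (seq.last x0 l) - F x0.
Proof.
  intros Hid l; induction l as [|y l IH]; intros x0 Hs Ha Hb.
  - unfold Riemann_sum. simpl. change (@zero R_ModuleSpace) with 0. lra.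
  - rewrite SF_cons_f2; [|simpl; lia].
    rewrite Riemann_sum_cons. simpl in Hb. destruct Hs as [Hxy Hs].
    pose proof (sorted_last_ge y l Hs) as Hy.
    rewrite (IH y Hs); [|lra|exact Hb].
    simpl. change (plus ?a ?b) with (a + b). change (scal ?a ?b) with (a * b).
    specialize (Hid x0 y Ha Hxy ltac:(lra)). simpl in *. lra.
Qed.

Definition mvt_point (F f : R -> R) (a b x y : R) : R :=
  epsilon (inhabits x) (fun c => (x <= y -> x <= c <= y) /\
     (a <= x -> x < y -> y <= b -> F y - F x = f c * (y - x))).

Lemma mvt_point_spec F f a b :
  (forall x, a <= x <= b -> derivable_pt_lim F x (f x)) ->
  forall x y, (x <= y -> x <= mvt_point F f a b x y <= y) /\
     (a <= x -> x < y -> y <= b -> F y - F x = f (mvt_point F f a b x y) * (y - x)).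
Proof.
  intros Hd x y. unfold mvt_point. apply epsilon_spec.
  destruct (classic (a <= x /\ x < y /\ y <= b)) as [[H1 [H2 H3]]|Hn].
  - destruct (MVT_cor2 F f x y H2) as [c [Hc1 Hc2]].
    { intros c Hc. apply Hd. lra. }
    exists c. split; [intros; lra|]. intros; exact Hc1.
  - exists x. split; [intros; lra|]. intros H1 H2 H3. exfalso; apply Hn; auto.
Qed.

Lemma ftc_integrable_derivative F f a b : a <= b ->
  (forall x, a <= x <= b -> derivable_pt_lim F x (f x)) ->
  ex_RInt f a b -> RInt f a b = F b - F a.
Proof.
  intros Hab Hd Hex.
  destruct (Req_dec a b) as [<-|Hne].
  { rewrite RInt_point. change (@zero R_CompleteNormedModule) with 0. lra. }
  apply cond_eq. intros eps Heps.
  destruct (RInt_correct _ _ _ Hex (ball (RInt f a b) eps)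
              (locally_ball _ (mkposreal eps Heps))) as [d Hd'].
  destruct (seq_step_unif_part_ex a b d) as [n Hn].
  set (tag := mvt_point F f a b).
  assert (Htag : forall x y, x <= y -> x <= tag x y <= y)
    by (intros x y; apply (mvt_point_spec F f a b Hd)).
  destruct (Riemann_fine_unif_part tag a b n Htag Hab) as [_ [Hptd [Hh Hl]]].
  assert (Hsz : (0 < seq.size (unif_part a b n))%nat)
    by (unfold unif_part; rewrite seq.size_mkseq; lia).
  specialize (Hd' (SF_seq_f2 tag (unif_part a b n))).
  rewrite SF_lx_f2 in Hd', Hl by exact Hsz.
  rewrite Rmin_left, Rmax_right in Hd' by lra.
  specialize (Hd' Hn (conj Hptd (conj Hh Hl))).
  rewrite sign_eq_1 in Hd' by lra.
  change (scal 1 ?x) with (1 * x) in Hd'; rewrite Rmult_1_l in Hd'.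
  assert (HRS : Riemann_sum f (SF_seq_f2 tag (unif_part a b n)) = F b - F a).
  { pose proof (last_unif_part 0 a b n) as HL. pose proof (head_unif_part 0 a b n) as HH.
    pose proof (unif_part_sort a b n Hab) as Hs.
    destruct (unif_part a b n) as [|x0 l]; [simpl in Hsz; lia|].
    simpl in HH, HL. subst x0.
    rewrite (riemann_sum_telescope F f a b tag); [rewrite HL; reflexivity | | exact Hs | lra | lra].
    intros x y H1 H2 H3.
    destruct (Rle_lt_or_eq_dec x y H2) as [H4|<-]; [|ring].
    apply (mvt_point_spec F f a b Hd); assumption. }
  change (@Riemann_sum _ f (SF_seq_f2 tag (unif_part a b n)))
    with (@Riemann_sum R_ModuleSpace f (SF_seq_f2 tag (unif_part a b n))) in Hd'.
  rewrite HRS in Hd'.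
  rewrite Rabs_minus_sym. exact Hd'.
Qed.

Lemma RInt_is_is_RInt f a b v : RInt_is f a b v -> is_RInt f a b v.
Proof.
  intros [pr <-]. rewrite <- (RInt_Reals f a b pr).
  apply (@RInt_correct R_CompleteNormedModule), ex_RInt_Reals_1, pr.
Qed.

Lemma derivable_pt_lim_continuous_at f x l : derivable_pt_lim f x l ->
  forall eps, 0 < eps ->
  exists del, 0 < del /\ forall y, Rabs (y - x) < del -> Rabs (f y - f x) < eps.
Proof.
  intros H eps Heps.
  assert (Hc : continuity_pt f x) by (apply derivable_continuous_pt; exists l; exact H).
  destruct (Hc eps Heps) as [del [Hdel Hy]].
  exists del. split; [exact Hdel|]. intros y Hy'.
  destruct (Req_dec y x) as [->|Hne].
  - rewrite Rminus_diag, Rabs_R0. exact Heps.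
  - apply (Hy y). split; [split; [exact I| auto]|]. exact Hy'.
Qed.

Lemma nonneg_barrier (f f' : R -> R) a b :
  (forall x, a <= x <= b -> derivable_pt_lim f x (f' x)) -> 0 <= f a ->
  (forall x, a <= x <= b -> f x < 0 -> 0 <= f' x) ->
  forall x, a <= x <= b -> 0 <= f x.
Proof.
  intros Hd Ha Hpos x1 Hx1.
  destruct (Rle_or_lt 0 (f x1)) as [H|Hneg]; [exact H|exfalso].
  (* m: the last point of [a, x1] where f is nonnegative *)
  set (E := fun y => a <= y <= x1 /\ 0 <= f y).
  destruct (completeness E) as [m [Hub Hlub]].
  { exists x1. intros y [Hy _]. lra. }
  { exists a. split; [lra|exact Ha]. }
  assert (Ham : a <= m) by (apply Hub; split; [lra|exact Ha]).
  assert (Hmx : m <= x1) by (apply Hlub; intros y [Hy _]; lra).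
  assert (Hneg_after : forall y, m < y <= x1 -> f y < 0).
  { intros y Hy. destruct (Rle_or_lt 0 (f y)) as [H|H]; [|exact H].
    assert (y <= m) by (apply Hub; split; [lra|exact H]). lra. }
  assert (Hfm : 0 <= f m).
  { destruct (Rle_or_lt 0 (f m)) as [H|H]; [exact H|exfalso].
    destruct (derivable_pt_lim_continuous_at f m (f' m) (Hd m ltac:(lra)) (- f m))
      as [del [Hdel Hc]]; [lra|].
    assert (m <= m - del); [|lra].
    apply Hlub. intros y [Hy Ey].
    destruct (Rle_or_lt y (m - del)) as [H1|H1]; [exact H1|exfalso].
    assert (y <= m) by (apply Hub; split; assumption).
    assert (Rabs (y - m) < del) by (apply Rabs_def1; lra).
    specialize (Hc y H2). apply Rabs_def2 in Hc. lra. }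
  assert (Hmx' : m < x1) by (destruct (Rle_lt_or_eq_dec m x1 Hmx); [assumption|subst; lra]).
  destruct (MVT_cor2 f f' m x1 Hmx') as [c [Hmvt Hc]].
  { intros c Hc. apply Hd. lra. }
  assert (0 <= f' c) by (apply Hpos; [lra|apply Hneg_after; lra]).
  assert (0 <= f' c * (x1 - m)) by (apply Rmult_le_pos; lra).
  lra.
Qed.

(* Comparison principle for the linear differential inequality d' >= A d,
   with A bounded above (no continuity of A is needed). *)
Lemma linear_comparison (d d' A : R -> R) a b M :
  (forall x, a <= x <= b -> derivable_pt_lim d x (d' x)) ->
  (forall x, a <= x <= b -> A x <= M) ->
  (forall x, a <= x <= b -> A x * d x <= d' x) ->
  0 <= d a -> forall x, a <= x <= b -> 0 <= d x.
Proof.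
  intros Hd HA Hineq Ha x Hx.
  (* e = d exp(-M x) cannot decrease while negative *)
  assert (He : 0 <= d x * exp (- (M * x))).
  { apply (nonneg_barrier (fun y => d y * exp (- (M * y)))
             (fun y => (d' y - M * d y) * exp (- (M * y))) a b); [| | |exact Hx].
    - intros y Hy.
      assert (Hexp : derivable_pt_lim (fun y => exp (- (M * y))) y (- M * exp (- (M * y)))).
      { apply is_derive_Reals. auto_derive; [exact I|ring]. }
      pose proof (derivable_pt_lim_mult _ _ _ _ _ (Hd y Hy) Hexp) as H.
      replace ((d' y - M * d y) * exp (- (M * y)))
        with (d' y * exp (- (M * y)) + d y * (- M * exp (- (M * y)))) by ring.
      exact H.
    - apply Rmult_le_pos; [exact Ha|left; apply exp_pos].
    - intros y Hy Hey. pose proof (exp_pos (- (M * y))).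
      assert (d y < 0) by nra.
      apply Rmult_le_pos; [|lra].
      pose proof (HA y Hy). pose proof (Hineq y Hy). nra. }
  pose proof (exp_pos (- (M * x))). nra.
Qed.

Definition clamp (a b y : R) : R := Rmax a (Rmin b y).

Lemma clamp_id a b y : a <= y <= b -> clamp a b y = y.
Proof. intros H. unfold clamp, Rmax, Rmin. repeat destruct Rle_dec; lra. Qed.

Lemma clamp_in a b y : a <= b -> a <= clamp a b y <= b.
Proof. intros H. unfold clamp, Rmax, Rmin. repeat destruct Rle_dec; lra. Qed.

Lemma clamp_lipschitz a b x y : a <= b -> Rabs (clamp a b y - clamp a b x) <= Rabs (y - x).
Proof.
  intros Hab. unfold clamp, Rmax, Rmin.
  repeat destruct Rle_dec; apply Rabs_le; split;
  (destruct (Rcase_abs (y - x)) as [H|H]; [rewrite Rabs_left by lra|rewrite Rabs_right by lra]); lra.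
Qed.

Lemma clamp_continuous a b (f : R -> R) x : a <= b ->
  (forall z, a <= z <= b -> continuity_pt f z) -> continuity_pt (fun y => f (clamp a b y)) x.
Proof.
  intros Hab Hf.
  change (continuity_pt (comp f (clamp a b)) x).
  apply continuity_pt_comp; [|apply Hf, clamp_in, Hab].
  intros eps Heps. exists eps. split; [exact Heps|].
  intros y [_ Hy]. simpl in *. unfold R_dist in *.
  pose proof (clamp_lipschitz a b x y Hab). lra.
Qed.

Lemma exp_integral_factor (A h h' psi IA : R -> R) a b : a <= b ->
  (forall x, a <= x <= b -> derivable_pt_lim h x (h' x)) ->
  (forall x, a <= x <= b -> continuity_pt psi x) ->
  (forall x, a <= x <= b -> A x = h' x - psi x) ->
  (forall s, a <= s <= b -> is_RInt A s b (IA s)) ->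
  exists E, (forall x, a <= x <= b -> derivable_pt_lim E x (- A x * E x)) /\
            (forall x, a <= x <= b -> E x = exp (IA x)) /\ E b = 1.
Proof.
  intros Hab Hh Hpsi HA HIA.
  set (phi := fun y => psi (clamp a b y)).
  assert (Hphi : forall x, continuity_pt phi x) by (intros x; apply clamp_continuous; assumption).
  assert (Hphi_int : forall u v, ex_RInt phi u v).
  { intros u v. apply (@ex_RInt_continuous R_CompleteNormedModule).
    intros z _. apply continuity_pt_filterlim, Hphi. }
  set (J := fun x => RInt phi x b).
  assert (HJ : forall x, derivable_pt_lim J x (- phi x)).
  { intros x. apply is_derive_Reals, (is_derive_RInt' phi J x b).
    - apply filter_forall. intros u. apply (@RInt_correct R_CompleteNormedModule), Hphi_int.
    - apply continuity_pt_filterlim, Hphi. }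
  (* since A + phi = h' on [s,b], integrating gives IA s + J s = h b - h s *)
  assert (HIA_eq : forall s, a <= s <= b -> IA s = h b - h s - J s).
  { intros s Hs.
    assert (Hsum : is_RInt h' s b (IA s + J s)).
    { apply (is_RInt_ext (fun x => A x + phi x)).
      - intros x Hx. rewrite Rmin_left, Rmax_right in Hx by lra.
        unfold phi. rewrite clamp_id, HA by lra. lra.
      - apply (is_RInt_plus A phi); [apply HIA, Hs|].
        apply (@RInt_correct R_CompleteNormedModule), Hphi_int. }
    assert (Hftc : RInt h' s b = h b - h s).
    { apply ftc_integrable_derivative; [lra| |exists (IA s + J s); exact Hsum].
      intros x Hx. apply Hh. lra. }
    rewrite (is_RInt_unique _ _ _ _ Hsum) in Hftc. lra. }
  exists (fun x => exp (h b - h x - J x)). split; [|split].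
  - intros x Hx.
    assert (Hin : derivable_pt_lim (fun x => h b - h x - J x) x (0 - h' x - - phi x)).
    { apply derivable_pt_lim_minus; [apply derivable_pt_lim_minus|apply HJ].
      - apply derivable_pt_lim_const.
      - apply Hh, Hx. }
    pose proof (derivable_pt_lim_comp _ exp x _ _ Hin (derivable_pt_lim_exp _)) as HE.
    unfold comp in HE. unfold phi in HE. rewrite clamp_id in HE by exact Hx.
    rewrite HA by exact Hx. replace (- (h' x - psi x) * exp (h b - h x - J x))
      with (exp (h b - h x - J x) * (0 - h' x - - psi x)) by ring.
    exact HE.
  - intros x Hx. rewrite HIA_eq by exact Hx. reflexivity.
  - unfold J. rewrite RInt_point. change (@zero R_CompleteNormedModule) with 0.
    replace (h b - h b - 0) with 0 by ring. apply exp_0.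
Qed.

Lemma variation_of_constants (y A q h h' psi IA : R -> R) a b T : a <= b ->
  (forall x, a <= x <= b -> derivable_pt_lim y x (A x * y x + q x)) -> y a = 0 ->
  (forall x, a <= x <= b -> derivable_pt_lim h x (h' x)) ->
  (forall x, a <= x <= b -> continuity_pt psi x) ->
  (forall x, a <= x <= b -> A x = h' x - psi x) ->
  (forall s, a <= s <= b -> is_RInt A s b (IA s)) ->
  is_RInt (fun s => q s * exp (IA s)) a b T -> T = y b.
Proof.
  intros Hab Hy Hya Hh Hpsi HA HIA HT.
  destruct (exp_integral_factor A h h' psi IA a b Hab Hh Hpsi HA HIA) as [E [HE [HEexp HEb]]].
  assert (HT' : is_RInt (fun s => q s * E s) a b T).
  { apply (is_RInt_ext (fun s => q s * exp (IA s))); [|exact HT].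
    intros x Hx. rewrite Rmin_left, Rmax_right in Hx by lra. rewrite HEexp by lra. reflexivity. }
  (* (y E)' = q E *)
  assert (HyE : forall x, a <= x <= b -> derivable_pt_lim (fun s => y s * E s) x (q x * E x)).
  { intros x Hx. pose proof (derivable_pt_lim_mult _ _ _ _ _ (Hy x Hx) (HE x Hx)) as H.
    replace (q x * E x) with ((A x * y x + q x) * E x + y x * (- A x * E x)) by ring.
    exact H. }
  rewrite <- (is_RInt_unique _ _ _ _ HT').
  rewrite (ftc_integrable_derivative (fun s => y s * E s) _ a b Hab HyE)
    by (exists T; exact HT').
  rewrite Hya, HEb. lra.
Qed.

(** * Positivity of g *)

Lemma exp_le x y : x <= y -> exp x <= exp y.
Proof. intros [H|<-]; [left; apply exp_increasing, H|right; reflexivity]. Qed.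

Lemma cosh_ge_1 u : 1 <= cosh u.
Proof.
  unfold cosh. rewrite exp_Ropp. pose proof (exp_pos u) as H.
  assert (exp u + / exp u - 2 = (exp u - 1) ^ 2 / exp u) by (field; lra).
  assert (0 <= (exp u - 1) ^ 2 / exp u)
    by (apply Rmult_le_pos; [apply pow2_ge_0|left; apply Rinv_0_lt_compat, H]).
  lra.
Qed.

Lemma cosh_le_e u : 0 <= u <= 1 -> cosh u <= exp 1.
Proof.
  intros Hu. unfold cosh.
  assert (exp (- u) <= exp u) by (apply exp_le; lra).
  assert (exp u <= exp 1) by (apply exp_le; lra). lra.
Qed.

Lemma one_minus_exp_lower h : 0 < h <= 1 -> h * / exp 1 <= 1 - exp (- h).
Proof.
  intros Hh. rewrite exp_Ropp. pose proof (exp_pos h). pose proof (exp_pos 1).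
  pose proof (exp_ineq1_le h).
  assert (exp h <= exp 1) by (apply exp_le; lra).
  assert (h * / exp 1 <= h * / exp h)
    by (apply Rmult_le_compat_l; [lra|apply Rinv_le_contravar; lra]).
  assert (1 - / exp h = (exp h - 1) * / exp h) by (field; lra).
  assert (h * / exp h <= (exp h - 1) * / exp h)
    by (apply Rmult_le_compat_r; [left; apply Rinv_0_lt_compat|]; lra).
  lra.
Qed.

Lemma improper_int_a_oo_approx f a l : improper_int_a_oo f a l ->
  forall eps, 0 < eps ->
  exists M, forall b, M < b -> ex_RInt f a b /\ Rabs (RInt f a b - l) < eps.
Proof.
  intros Hf eps Heps. destruct (Hf eps Heps) as [M HM].
  exists M. intros b Hb. destruct (HM b Hb) as [pr Hpr].
  split; [apply ex_RInt_Reals_1, pr|]. rewrite (RInt_Reals f a b pr). exact Hpr.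
Qed.

Lemma RInt_nonpos_dip f a m n b c : a <= m -> m <= n -> n <= b -> ex_RInt f a b ->
  (forall x, a < x < b -> f x <= 0) -> (forall x, m < x < n -> f x <= - c) ->
  RInt f a b <= - c * (n - m).
Proof.
  intros Ham Hmn Hnb Hex Hneg Hdip.
  assert (Ham_ : ex_RInt f a m) by (apply (ex_RInt_Chasles_1 f a m b); [lra|exact Hex]).
  assert (Hmb : ex_RInt f m b) by (apply (ex_RInt_Chasles_2 f a m b); [lra|exact Hex]).
  assert (Hmn_ : ex_RInt f m n) by (apply (ex_RInt_Chasles_1 f m n b); [lra|exact Hmb]).
  assert (Hnb_ : ex_RInt f n b) by (apply (ex_RInt_Chasles_2 f m n b); [lra|exact Hmb]).
  rewrite <- (RInt_Chasles f a m b Ham_ Hmb), <- (RInt_Chasles f m n b Hmn_ Hnb_).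
  assert (I1 : RInt f a m <= RInt (fun _ => 0) a m)
    by (apply RInt_le; [lra|exact Ham_|apply ex_RInt_const|intros x Hx; apply Hneg; lra]).
  assert (I2 : RInt f m n <= RInt (fun _ => - c) m n)
    by (apply RInt_le; [lra|exact Hmn_|apply ex_RInt_const|intros x Hx; apply Hdip; lra]).
  assert (I3 : RInt f n b <= RInt (fun _ => 0) n b)
    by (apply RInt_le; [lra|exact Hnb_|apply ex_RInt_const|intros x Hx; apply Hneg; lra]).
  rewrite !RInt_const in I1, I2, I3.
  change (scal ?x ?y) with (x * y) in I1, I2, I3.
  repeat progress change (plus ?x ?y) with (x + y).
  lra.
Qed.


Definition third_diff_kernel (r h u : R) : R :=
  exp (- (r + 3 * h) * cosh u) - 3 * exp (- (r + 2 * h) * cosh u)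
  + 3 * exp (- (r + h) * cosh u) - exp (- r * cosh u).

(* The kernel is a perfect cube, hence nonpositive, and bounded away from 0 for u <= 1. *)
Lemma third_diff_kernel_factor r h u :
  third_diff_kernel r h u = - exp (- r * cosh u) * (1 - exp (- h * cosh u)) ^ 3.
Proof.
  unfold third_diff_kernel.
  replace (- (r + 3 * h) * cosh u) with (- r * cosh u + (- h * cosh u + (- h * cosh u + - h * cosh u))) by ring.
  replace (- (r + 2 * h) * cosh u) with (- r * cosh u + (- h * cosh u + - h * cosh u)) by ring.
  replace (- (r + h) * cosh u) with (- r * cosh u + - h * cosh u) by ring.
  rewrite !exp_plus. ring.
Qed.

Lemma third_diff_kernel_nonpos r h u : 0 <= h -> third_diff_kernel r h u <= 0.
Proof.
  intros Hh. rewrite third_diff_kernel_factor.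
  pose proof (cosh_ge_1 u). pose proof (exp_pos (- r * cosh u)).
  assert (exp (- h * cosh u) <= exp 0) by (apply exp_le; nra). rewrite exp_0 in H1.
  assert (0 <= (1 - exp (- h * cosh u)) ^ 3) by (apply pow_le; lra).
  nra.
Qed.

(* The constant c(R0) with third differences of K0 below -c(R0) h^3 on (0, R0]. *)
Definition third_diff_const (R0 : R) : R := exp (- (R0 * exp 1)) * (/ exp 1) ^ 3.

Lemma third_diff_const_pos R0 : 0 < third_diff_const R0.
Proof.
  unfold third_diff_const.
  apply Rmult_lt_0_compat; [apply exp_pos|apply pow_lt, Rinv_0_lt_compat, exp_pos].
Qed.

Lemma third_diff_const_decr R1 R2 : R1 <= R2 -> third_diff_const R2 <= third_diff_const R1.
Proof.
  intros H. unfold third_diff_const.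
  apply Rmult_le_compat_r; [left; apply pow_lt, Rinv_0_lt_compat, exp_pos|].
  apply exp_le. pose proof (exp_pos 1). nra.
Qed.

Lemma third_diff_kernel_bound r h R0 u : 0 <= r -> 0 < h <= 1 -> r <= R0 -> 0 <= u <= 1 ->
  third_diff_kernel r h u <= - third_diff_const R0 * h ^ 3.
Proof.
  intros Hr Hh HR Hu. rewrite third_diff_kernel_factor. unfold third_diff_const.
  pose proof (cosh_ge_1 u). pose proof (cosh_le_e u Hu). pose proof (exp_pos 1).
  assert (Hq : exp (- h * cosh u) <= exp (- h)) by (apply exp_le; nra).
  pose proof (one_minus_exp_lower h Hh).
  assert (He1 : 0 < / exp 1) by (apply Rinv_0_lt_compat, exp_pos).
  assert (H3 : (h * / exp 1) ^ 3 <= (1 - exp (- h * cosh u)) ^ 3)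
    by (apply pow_incr; nra).
  assert (He : exp (- (R0 * exp 1)) <= exp (- r * cosh u)) by (apply exp_le; nra).
  pose proof (exp_pos (- (R0 * exp 1))).
  assert (0 <= (h * / exp 1) ^ 3) by (apply pow_le; nra).
  assert (exp (- (R0 * exp 1)) * (h * / exp 1) ^ 3
          <= exp (- r * cosh u) * (1 - exp (- h * cosh u)) ^ 3)
    by (apply Rmult_le_compat; lra).
  replace (exp (- (R0 * exp 1)) * (h * / exp 1) ^ 3)
    with (exp (- (R0 * exp 1)) * (/ exp 1) ^ 3 * h ^ 3) in H6 by ring.
  lra.
Qed.

Definition second_diff (f : R -> R) (x h : R) : R := f (x + 2 * h) - 2 * f (x + h) + f x.

Lemma derivable_pt_lim_affine_comp f l x0 c s : derivable_pt_lim f (x0 + c * s) l ->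
  derivable_pt_lim (fun s => f (x0 + c * s)) s (c * l).
Proof.
  intros H.
  assert (Ha : derivable_pt_lim (fun s => x0 + c * s) s c)
    by (apply is_derive_Reals; auto_derive; [exact I|ring]).
  pose proof (derivable_pt_lim_comp _ _ _ _ _ Ha H) as HH.
  unfold comp in HH. rewrite Rmult_comm. exact HH.
Qed.

Lemma small_step L d : 0 < L -> 0 < d -> exists N, (1 <= N)%nat /\ L / INR N < d.
Proof.
  intros HL Hd. destruct (archimed (L / d)) as [Hup _].
  exists (S (Z.to_nat (up (L / d)))). split; [lia|].
  assert (HN : L / d < INR (S (Z.to_nat (up (L / d))))).
  { rewrite S_INR. destruct (Z_lt_le_dec (up (L / d)) 0) as [Hneg|Hnn].
    - apply IZR_lt in Hneg. pose proof (pos_INR (Z.to_nat (up (L / d)))). lra.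
    - rewrite INR_IZR_INZ, Z2Nat.id by exact Hnn. lra. }
  assert (HNp : 0 < INR (S (Z.to_nat (up (L / d))))) by (apply lt_0_INR; lia).
  apply (Rmult_lt_reg_r (INR (S (Z.to_nat (up (L / d)))))); [exact HNp|].
  apply (Rmult_lt_compat_l d) in HN; [|exact Hd].
  replace (d * (L / d)) with L in HN by (field; lra).
  replace (L / INR (S (Z.to_nat (up (L / d)))) * INR (S (Z.to_nat (up (L / d))))) with L
    by (field; lra).
  lra.
Qed.

Section BesselK0.

Variables K0 K1 K2 K3 : R -> R.
Hypothesis hK0 : is_BesselK0 K0.
Hypothesis hK1 : forall r, 0 < r -> derivable_pt_lim K0 r (K1 r).
Hypothesis hK2 : forall r, 0 < r -> derivable_pt_lim K1 r (K2 r).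
Hypothesis hK3 : forall r, 0 < r -> derivable_pt_lim K2 r (K3 r).

(* Third differences of K0: integrate the kernel bound against the representation. *)
Lemma K0_third_difference r h R0 : 0 < r -> 0 < h <= 1 -> r <= R0 ->
  K0 (r + 3 * h) - 3 * K0 (r + 2 * h) + 3 * K0 (r + h) - K0 r
  <= - third_diff_const R0 * h ^ 3.
Proof.
  intros Hr Hh HR.
  apply Rle_plus_epsilon. intros eps Heps.
  destruct (improper_int_a_oo_approx _ _ _ (hK0 (r + 3 * h) ltac:(lra)) (eps / 8)) as [M3 HM3]; [lra|].
  destruct (improper_int_a_oo_approx _ _ _ (hK0 (r + 2 * h) ltac:(lra)) (eps / 8)) as [M2 HM2]; [lra|].
  destruct (improper_int_a_oo_approx _ _ _ (hK0 (r + h) ltac:(lra)) (eps / 8)) as [M1 HM1]; [lra|].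
  destruct (improper_int_a_oo_approx _ _ _ (hK0 r Hr) (eps / 8)) as [M0 HM0]; [lra|].
  (* truncate all four integrals at a common b > 1 *)
  set (b := Rmax (Rmax (Rmax M0 M1) (Rmax M2 M3)) 1 + 1).
  pose proof (Rmax_l (Rmax (Rmax M0 M1) (Rmax M2 M3)) 1).
  pose proof (Rmax_r (Rmax (Rmax M0 M1) (Rmax M2 M3)) 1).
  pose proof (Rmax_l (Rmax M0 M1) (Rmax M2 M3)). pose proof (Rmax_r (Rmax M0 M1) (Rmax M2 M3)).
  pose proof (Rmax_l M0 M1). pose proof (Rmax_r M0 M1).
  pose proof (Rmax_l M2 M3). pose proof (Rmax_r M2 M3).
  destruct (HM3 b ltac:(unfold b; lra)) as [E3 A3].
  destruct (HM2 b ltac:(unfold b; lra)) as [E2 A2].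
  destruct (HM1 b ltac:(unfold b; lra)) as [E1 A1].
  destruct (HM0 b ltac:(unfold b; lra)) as [E0 A0].
  assert (Hcomb : is_RInt (third_diff_kernel r h) 0 b
     (RInt (fun u => exp (- (r + 3 * h) * cosh u)) 0 b
      - 3 * RInt (fun u => exp (- (r + 2 * h) * cosh u)) 0 b
      + 3 * RInt (fun u => exp (- (r + h) * cosh u)) 0 b
      - RInt (fun u => exp (- r * cosh u)) 0 b)).
  { pose proof (@RInt_correct R_CompleteNormedModule _ _ _ E3) as I3.
    pose proof (@RInt_correct R_CompleteNormedModule _ _ _ E2) as I2.
    pose proof (@RInt_correct R_CompleteNormedModule _ _ _ E1) as I1.
    pose proof (@RInt_correct R_CompleteNormedModule _ _ _ E0) as I0.
    pose proof (is_RInt_minus _ _ _ _ _ _ (is_RInt_plus _ _ _ _ _ _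
      (is_RInt_minus _ _ _ _ _ _ I3 (is_RInt_scal _ _ _ 3 _ I2))
      (is_RInt_scal _ _ _ 3 _ I1)) I0) as HH.
    apply (is_RInt_ext _ (third_diff_kernel r h)) in HH; [exact HH|reflexivity]. }
  assert (Hle : RInt (third_diff_kernel r h) 0 b <= - (third_diff_const R0 * h ^ 3) * (1 - 0)).
  { apply RInt_nonpos_dip; [lra|lra|unfold b; lra|eexists; exact Hcomb| |].
    - intros u Hu. apply third_diff_kernel_nonpos. lra.
    - intros u Hu. pose proof (third_diff_kernel_bound r h R0 u); lra. }
  rewrite (is_RInt_unique _ _ _ _ Hcomb) in Hle.
  apply Rabs_def2 in A3. apply Rabs_def2 in A2. apply Rabs_def2 in A1. apply Rabs_def2 in A0.
  lra.
Qed.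

Lemma K0_second_difference x h : 0 < x -> 0 < h ->
  exists xi, x < xi < x + 2 * h /\ second_diff K0 x h = h ^ 2 * K2 xi.
Proof.
  intros Hx Hh. unfold second_diff.
  set (A := (K0 (x + 2 * h) - 2 * K0 (x + h) + K0 x) / h ^ 2).
  (* G takes the same value at 0 and h, so G' vanishes at some c in (0, h) *)
  set (G := fun s => K0 (x + 2 * s) - 2 * K0 (x + 1 * s) - A * s ^ 2).
  set (G' := fun s => 2 * K1 (x + 2 * s) - 2 * (1 * K1 (x + 1 * s)) - A * (2 * s)).
  destruct (MVT_cor2 G G' 0 h Hh) as [c [HGc Hc]].
  { intros c Hc. unfold G, G'.
    assert (Hsq : derivable_pt_lim (fun s => A * s ^ 2) c (A * (2 * c)))
      by (apply is_derive_Reals; auto_derive; [exact I|ring]).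
    apply derivable_pt_lim_minus; [apply derivable_pt_lim_minus|exact Hsq].
    - apply derivable_pt_lim_affine_comp, hK1. lra.
    - apply (derivable_pt_lim_scal (fun s => K0 (x + 1 * s))).
      apply derivable_pt_lim_affine_comp, hK1. lra. }
  assert (HA : A * h ^ 2 = K0 (x + 2 * h) - 2 * K0 (x + h) + K0 x) by (unfold A; field; lra).
  assert (HG'c : G' c = 0).
  { unfold G in HGc. replace (x + 2 * 0) with x in HGc by ring.
    replace (x + 1 * 0) with x in HGc by ring. replace (x + 1 * h) with (x + h) in HGc by ring.
    assert (G' c * h = 0) by nra.
    apply Rmult_integral in H. destruct H; [assumption|lra]. }
  destruct (MVT_cor2 K1 K2 (x + c) (x + 2 * c)) as [xi [HK1c Hxi]]; [lra|intros y Hy; apply hK2; lra|].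
  exists xi. split; [lra|].
  unfold G' in HG'c. replace (x + 1 * c) with (x + c) in HG'c by ring.
  assert (A = K2 xi).
  { apply (Rmult_eq_reg_r c); [|lra].
    replace (x + 2 * c - (x + c)) with c in HK1c by ring. nra. }
  rewrite <- HA, H. ring.
Qed.

Lemma K0_second_difference_decrease x h R0 N : 0 < x -> 0 < h <= 1 -> x + INR N * h <= R0 ->
  second_diff K0 (x + INR N * h) h <= second_diff K0 x h - INR N * third_diff_const R0 * h ^ 3.
Proof.
  intros Hx Hh. induction N as [|N IH]; intros HN.
  - simpl. replace (x + 0 * h) with x by ring. lra.
  - rewrite S_INR in *.
    assert (Hr : 0 < x + INR N * h) by (pose proof (pos_INR N); nra).
    specialize (IH ltac:(lra)).
    pose proof (K0_third_difference (x + INR N * h) h R0 Hr Hh ltac:(lra)) as H3.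
    unfold second_diff in *.
    replace (x + (INR N + 1) * h) with (x + INR N * h + h) by ring.
    replace (x + INR N * h + h + 2 * h) with (x + INR N * h + 3 * h) by ring.
    replace (x + INR N * h + h + h) with (x + INR N * h + 2 * h) by ring.
    lra.
Qed.

Lemma K2_slope_discrete x y R0 N : 0 < x < y -> y <= R0 -> (1 <= N)%nat -> (y - x) / INR N <= 1 ->
  exists xi1 xi2, x < xi1 < x + 2 * ((y - x) / INR N) /\ y < xi2 < y + 2 * ((y - x) / INR N) /\
    K2 xi2 <= K2 xi1 - third_diff_const R0 * (y - x).
Proof.
  intros Hxy HyR HN Hh1. set (h := (y - x) / INR N).
  assert (HNp : 0 < INR N) by (apply lt_0_INR; lia).
  assert (Hh : 0 < h) by (apply Rdiv_lt_0_compat; lra).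
  assert (HNh : x + INR N * h = y) by (unfold h; field; lra).
  pose proof (K0_second_difference_decrease x h R0 N ltac:(lra) (conj Hh Hh1) ltac:(lra)) as Hdec.
  rewrite HNh in Hdec.
  destruct (K0_second_difference x h ltac:(lra) Hh) as [xi1 [Hx1 E1]].
  destruct (K0_second_difference y h ltac:(lra) Hh) as [xi2 [Hx2 E2]].
  exists xi1, xi2. split; [exact Hx1|]. split; [exact Hx2|].
  rewrite E1, E2 in Hdec.
  assert (Hh2 : 0 < h ^ 2) by (apply pow_lt; lra).
  apply (Rmult_le_reg_l (h ^ 2)); [exact Hh2|].
  replace (h ^ 2 * (K2 xi1 - third_diff_const R0 * (y - x)))
    with (h ^ 2 * K2 xi1 - INR N * third_diff_const R0 * h ^ 3)
    by (rewrite <- HNh; ring).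
  exact Hdec.
Qed.

Lemma K2_slope_bound x y R0 : 0 < x < y -> y <= R0 ->
  K2 y <= K2 x - third_diff_const R0 * (y - x).
Proof.
  intros Hxy HyR.
  destruct (Rle_or_lt (K2 y) (K2 x - third_diff_const R0 * (y - x))) as [H|H]; [exact H|exfalso].
  set (eps := (K2 y - (K2 x - third_diff_const R0 * (y - x))) / 2).
  assert (Heps : 0 < eps) by (unfold eps; lra).
  destruct (derivable_pt_lim_continuous_at K2 x (K3 x) (hK3 x ltac:(lra)) eps Heps)
    as [d1 [Hd1 Cx]].
  destruct (derivable_pt_lim_continuous_at K2 y (K3 y) (hK3 y ltac:(lra)) eps Heps)
    as [d2 [Hd2 Cy]].
  (* steps so small that the mean-value points are eps-close in K2 *)
  set (d := Rmin (Rmin d1 d2) 1).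
  assert (Hdd : 0 < d /\ d <= d1 /\ d <= d2 /\ d <= 1).
  { unfold d. pose proof (Rmin_l (Rmin d1 d2) 1). pose proof (Rmin_r (Rmin d1 d2) 1).
    pose proof (Rmin_l d1 d2). pose proof (Rmin_r d1 d2).
    repeat split; try lra. apply Rmin_glb_lt; [apply Rmin_glb_lt|]; lra. }
  destruct (small_step (y - x) (d / 2)) as [N [HN Hstep]]; [lra|lra|].
  destruct (K2_slope_discrete x y R0 N Hxy HyR HN ltac:(lra)) as [xi1 [xi2 [Hx1 [Hx2 Hk]]]].
  assert (Rabs (xi1 - x) < d1) by (apply Rabs_def1; lra).
  assert (Rabs (xi2 - y) < d2) by (apply Rabs_def1; lra).
  specialize (Cx xi1 H0). specialize (Cy xi2 H1).
  apply Rabs_def2 in Cx. apply Rabs_def2 in Cy.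
  unfold eps in *. lra.
Qed.

Lemma K3_upper x R0 : 0 < x -> x + 1 <= R0 -> K3 x <= - third_diff_const R0.
Proof.
  intros Hx HR.
  destruct (Rle_or_lt (K3 x) (- third_diff_const R0)) as [H|H]; [exact H|exfalso].
  destruct (hK3 x Hx (K3 x + third_diff_const R0) ltac:(lra)) as [del Hdel].
  set (h := Rmin (del / 2) 1).
  pose proof (cond_pos del). pose proof (Rmin_l (del / 2) 1). pose proof (Rmin_r (del / 2) 1).
  assert (Hh : 0 < h) by (apply Rmin_glb_lt; lra).
  specialize (Hdel h (Rgt_not_eq _ _ Hh) ltac:(unfold h in *; rewrite Rabs_pos_eq; lra)).
  pose proof (K2_slope_bound x (x + h) R0 ltac:(lra) ltac:(unfold h in *; lra)) as Hd.
  apply Rabs_def2 in Hdel.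
  assert ((K2 (x + h) - K2 x) / h <= - third_diff_const R0).
  { apply (Rmult_le_reg_r h); [exact Hh|].
    replace ((K2 (x + h) - K2 x) / h * h) with (K2 (x + h) - K2 x) by (field; lra).
    replace (x + h - x) with h in Hd by ring. lra. }
  lra.
Qed.

Lemma g_integrand_bound s r : 0 < s < r ->
  K3 r * r / sqrt (r ^ 2 - s ^ 2) <= - third_diff_const (r + 1).
Proof.
  intros Hsr.
  assert (H3 : K3 r <= - third_diff_const (r + 1)) by (apply K3_upper; lra).
  pose proof (third_diff_const_pos (r + 1)).
  assert (Hq : 0 < r ^ 2 - s ^ 2) by nra.
  pose proof (sqrt_lt_R0 _ Hq) as Hsq.
  assert (Hsr' : sqrt (r ^ 2 - s ^ 2) <= r).
  { pose proof (sqrt_le_1_alt (r ^ 2 - s ^ 2) (r ^ 2) ltac:(nra)) as Hq2.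
    rewrite sqrt_pow2 in Hq2 by lra. exact Hq2. }
  assert (Hratio : 1 <= r / sqrt (r ^ 2 - s ^ 2)).
  { apply (Rmult_le_reg_r (sqrt (r ^ 2 - s ^ 2))); [exact Hsq|].
    replace (r / sqrt (r ^ 2 - s ^ 2) * sqrt (r ^ 2 - s ^ 2)) with r by (field; lra). lra. }
  unfold Rdiv. rewrite Rmult_assoc. fold (Rdiv r (sqrt (r ^ 2 - s ^ 2))). nra.
Qed.

Lemma g_pos g : is_g K3 g -> forall s, 0 < s -> 0 < g s.
Proof.
  intros hg s Hs.
  destruct (hg s Hs) as [I [Himp Hgs]].
  set (c := third_diff_const (s + 3)). assert (Hc : 0 < c) by apply third_diff_const_pos.
  (* I <= - c / 2: truncate the improper integral to [u, b] with s < u < s + 1 < s + 2 < b *)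
  assert (HI : I <= - c / 2).
  { destruct (Himp (c / 2) ltac:(lra)) as [del [Hdel [M HM]]].
    set (u := s + Rmin del 1 / 2). set (b := Rmax M (s + 2) + 1).
    pose proof (Rmin_l del 1). pose proof (Rmin_r del 1).
    assert (0 < Rmin del 1) by (apply Rmin_glb_lt; lra).
    pose proof (Rmax_l M (s + 2)). pose proof (Rmax_r M (s + 2)).
    destruct (HM u b ltac:(unfold u; lra) ltac:(unfold b; lra)) as [pr Hpr].
    rewrite <- RInt_Reals in Hpr.
    assert (Hle : RInt (fun r => K3 r * r / sqrt (r ^ 2 - s ^ 2)) u b <= - c * (s + 2 - (s + 1))).
    { apply RInt_nonpos_dip; [unfold u; lra|lra|unfold b; lra|apply ex_RInt_Reals_1, pr| |].
      - intros r Hr. pose proof (g_integrand_bound s r ltac:(unfold u in Hr; lra)).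
        pose proof (third_diff_const_pos (r + 1)). lra.
      - intros r Hr. pose proof (g_integrand_bound s r ltac:(lra)).
        assert (c <= third_diff_const (r + 1)) by (apply third_diff_const_decr; lra). lra. }
    apply Rabs_def2 in Hpr. lra. }
  rewrite Hgs. pose proof PI_RGT_0.
  assert (0 < s / (4 * PI)) by (apply Rdiv_lt_0_compat; lra).
  nra.
Qed.

End BesselK0.

(** * The second coefficient

    The coefficient
    B is only known to be integrable; the integrating factor is built from
    v = C2 + pi s^2 / (2 kap), which satisfies (ln v)' = kap B + pi s / (kap v). *)

Section SecondCoefficient.

Variables (t0 t kap MB : R) (B Gam C2 : R -> R).
Hypothesis ht0 : 0 < t0.
Hypothesis ht : t0 < t.
Hypothesis hkap : 0 < kap.
Hypothesis hB : forall s, t0 <= s <= t -> 0 < B s.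
Hypothesis hMB : forall s, t0 <= s <= t -> B s <= MB.
Hypothesis hGam : forall s, Gam s = PI / 2 * s ^ 2 * B s.
Hypothesis hC2init : C2 t0 = 0.
Hypothesis hC2ode : forall s, t0 <= s <= t ->
  derivable_pt_lim C2 s (kap * B s * C2 s + Gam s).

(* C2 >= 0 by comparison, since C2' >= kap B C2. *)
Lemma second_coefficient_nonneg s : t0 <= s <= t -> 0 <= C2 s.
Proof.
  apply (linear_comparison C2 _ (fun x => kap * B x) t0 t (kap * MB) hC2ode).
  - intros x Hx. apply Rmult_le_compat_l; [lra|apply hMB, Hx].
  - intros x Hx. pose proof (hB x Hx). pose proof PI_RGT_0.
    assert (0 <= x ^ 2) by apply pow2_ge_0.
    assert (0 <= PI / 2 * x ^ 2 * B x) by (apply Rmult_le_pos; [apply Rmult_le_pos|]; lra).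
    rewrite hGam. lra.
  - rewrite hC2init. lra.
Qed.

Lemma second_coefficient_pos : 0 < C2 t.
Proof.
  destruct (MVT_cor2 C2 _ t0 t ht hC2ode) as [c [Hmvt Hc]].
  pose proof (second_coefficient_nonneg c ltac:(lra)). pose proof (hB c ltac:(lra)).
  pose proof PI_RGT_0.
  assert (0 < c ^ 2) by (apply pow_lt; lra).
  assert (0 < PI / 2 * c ^ 2 * B c) by (apply Rmult_lt_0_compat; [apply Rmult_lt_0_compat|]; lra).
  assert (0 <= kap * B c * C2 c) by (apply Rmult_le_pos; [apply Rmult_le_pos|]; lra).
  rewrite hC2init in Hmvt.
  rewrite hGam in Hmvt.
  assert (0 < (kap * B c * C2 c + PI / 2 * c ^ 2 * B c) * (t - t0))
    by (apply Rmult_lt_0_compat; lra).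
  lra.
Qed.

Lemma second_coefficient_value (Bint : R -> R) (tau : R) :
  (forall s, t0 <= s <= t -> is_RInt B s t (Bint s)) ->
  is_RInt (fun s => Gam s * exp (kap * Bint s)) t0 t tau ->
  tau = C2 t.
Proof.
  intros hBint htau.
  set (v := fun s => C2 s + PI * s ^ 2 / (2 * kap)).
  assert (Hv : forall s, t0 <= s <= t -> 0 < v s).
  { intros s Hs. pose proof (second_coefficient_nonneg s Hs). pose proof PI_RGT_0.
    assert (0 < PI * s ^ 2 / (2 * kap))
      by (apply Rdiv_lt_0_compat; [apply Rmult_lt_0_compat; [|apply pow_lt]|]; lra).
    unfold v. lra. }
  assert (Hdv : forall s, t0 <= s <= t -> derivable_pt_lim v s (kap * B s * v s + PI * s / kap)).
  { intros s Hs.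
    assert (Hq : derivable_pt_lim (fun s => PI * s ^ 2 / (2 * kap)) s (PI * s / kap))
      by (apply is_derive_Reals; auto_derive; [exact I|field; lra]).
    pose proof (derivable_pt_lim_plus _ _ _ _ _ (hC2ode s Hs) Hq) as H.
    replace (kap * B s * v s + PI * s / kap)
      with (kap * B s * C2 s + Gam s + PI * s / kap) by (unfold v; rewrite hGam; field; lra).
    exact H. }
  apply (variation_of_constants C2 (fun s => kap * B s) Gam
           (fun s => ln (v s)) (fun s => / v s * (kap * B s * v s + PI * s / kap))
           (fun s => PI * s / (kap * v s)) (fun s => kap * Bint s) t0 t tau);
    [lra|exact hC2ode|exact hC2init| | | | |exact htau].
  - intros x Hx.
    exact (derivable_pt_lim_comp v ln x _ _ (Hdv x Hx) (derivable_pt_lim_ln _ (Hv x Hx))).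
  - intros x Hx. apply continuity_pt_div.
    + apply continuity_pt_mult; [apply continuity_pt_const; intros ? ?; reflexivity|apply continuity_pt_id].
    + apply continuity_pt_mult; [apply continuity_pt_const; intros ? ?; reflexivity|].
      apply derivable_continuous_pt. exists (kap * B x * v x + PI * x / kap). exact (Hdv x Hx).
    + pose proof (Hv x Hx). nra.
  - intros x Hx. pose proof (Hv x Hx). field. lra.
  - intros s Hs. exact (is_RInt_scal _ _ _ kap _ (hBint s Hs)).
Qed.

End SecondCoefficient.

(** * Tree coefficients

    b_1 = 1 and (n - 1) b_n = (n / 2) sum_{j=1}^{n-1} b_j b_{n-j} for n >= 2;
    these are the Taylor coefficients of -W(-x)/x = sum_m b_{m+1} x^m. *)

(* The recursion, computed with enough fuel (fuel >= n suffices). *)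
Fixpoint tree_coef_fuel (fuel n : nat) : R :=
  match fuel with
  | O => 0
  | S f => match n with
           | O => 0
           | S O => 1
           | _ => INR n / (2 * (INR n - 1))
                    * sum_f 1 (n - 1) (fun j => tree_coef_fuel f j * tree_coef_fuel f (n - j))
           end
  end.

Definition tree_coef (n : nat) : R := tree_coef_fuel n n.

Lemma sum_f_ext (s n : nat) (F G : nat -> R) : (s <= n)%nat ->
  (forall j, (s <= j <= n)%nat -> F j = G j) -> sum_f s n F = sum_f s n G.
Proof. intros Hs H. unfold sum_f. apply sum_eq. intros i Hi. apply H. lia. Qed.

Lemma sum_f_le s n F G : (s <= n)%nat -> (forall j, (s <= j <= n)%nat -> F j <= G j) ->
  sum_f s n F <= sum_f s n G.
Proof. intros Hs H. unfold sum_f. apply sum_Rle. intros i Hi. apply H. lia. Qed.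

Lemma sum_f_nonneg s n F : (s <= n)%nat -> (forall j, (s <= j <= n)%nat -> 0 <= F j) ->
  0 <= sum_f s n F.
Proof.
  intros Hs H. replace 0 with (sum_f s n (fun _ => 0)); [apply sum_f_le; assumption|].
  unfold sum_f. rewrite sum_cte. ring.
Qed.

Lemma sum_f_scal s n F x : x * sum_f s n F = sum_f s n (fun j => x * F j).
Proof. unfold sum_f. rewrite scal_sum. apply sum_eq. intros; ring. Qed.

Lemma tree_coef_fuel_step f n : tree_coef_fuel (S f) (S (S n)) =
  INR (S (S n)) / (2 * (INR (S (S n)) - 1))
  * sum_f 1 (S (S n) - 1) (fun j => tree_coef_fuel f j * tree_coef_fuel f (S (S n) - j)).
Proof. reflexivity. Qed.

Lemma tree_coef_fuel_stable : forall f1 f2 n, (n <= f1)%nat -> (n <= f2)%nat ->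
  tree_coef_fuel f1 n = tree_coef_fuel f2 n.
Proof.
  induction f1 as [|f1 IH]; intros f2 n H1 H2.
  - replace n with 0%nat by lia. destruct f2; reflexivity.
  - destruct f2 as [|f2]; [replace n with 0%nat by lia; reflexivity|].
    destruct n as [|[|n]]; [reflexivity|reflexivity|].
    rewrite !tree_coef_fuel_step. f_equal. apply sum_f_ext; [lia|].
    intros j Hj. f_equal; apply IH; lia.
Qed.

Lemma tree_coef_1 : tree_coef 1 = 1.
Proof. reflexivity. Qed.

Lemma tree_coef_rec n : (2 <= n)%nat ->
  tree_coef n = INR n / (2 * (INR n - 1)) * sum_f 1 (n - 1) (fun j => tree_coef j * tree_coef (n - j)).
Proof.
  intros Hn. unfold tree_coef. destruct n as [|[|m]]; [lia|lia|].
  rewrite tree_coef_fuel_step. f_equal. apply sum_f_ext; [lia|].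
  intros j Hj. f_equal; apply tree_coef_fuel_stable; lia.
Qed.

Lemma tree_coef_rec_mult n : (2 <= n)%nat ->
  (INR n - 1) * tree_coef n = INR n / 2 * sum_f 1 (n - 1) (fun j => tree_coef j * tree_coef (n - j)).
Proof.
  intros Hn. rewrite (tree_coef_rec n Hn).
  assert (2 <= INR n) by (replace 2 with (INR 2) by (simpl; ring); apply le_INR, Hn).
  field. lra.
Qed.

Lemma tree_coef_2 : tree_coef 2 = 1.
Proof. rewrite tree_coef_rec by lia. unfold sum_f. simpl. rewrite tree_coef_1. field. Qed.

Lemma tree_coef_nonneg n : 0 <= tree_coef n.
Proof.
  induction n as [n IH] using lt_wf_ind.
  destruct n as [|[|m]]; [unfold tree_coef; simpl; lra|rewrite tree_coef_1; lra|].
  rewrite tree_coef_rec by lia.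
  assert (2 <= INR (S (S m))) by (rewrite !S_INR; pose proof (pos_INR m); lra).
  apply Rmult_le_pos.
  - unfold Rdiv. apply Rmult_le_pos; [lra|left; apply Rinv_0_lt_compat; lra].
  - apply sum_f_nonneg; [lia|]. intros j Hj. apply Rmult_le_pos; apply IH; lia.
Qed.

Lemma quadratic_sum_bound (a : nat -> R) y n : (2 <= n)%nat ->
  (forall j, (1 <= j < n)%nat -> 0 <= a j <= tree_coef j * y ^ (j - 1)) ->
  0 <= sum_f 1 (n - 1) (fun j => a j * a (n - j)%nat)
    <= y ^ (n - 2) * sum_f 1 (n - 1) (fun j => tree_coef j * tree_coef (n - j)).
Proof.
  intros Hn Ha. split.
  - apply sum_f_nonneg; [lia|]. intros j Hj.
    apply Rmult_le_pos; [apply (Ha j)|apply (Ha (n - j)%nat)]; lia.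
  - rewrite sum_f_scal. apply sum_f_le; [lia|]. intros j Hj.
    destruct (Ha j ltac:(lia)) as [H1 H2]. destruct (Ha (n - j)%nat ltac:(lia)) as [H3 H4].
    replace (y ^ (n - 2) * (tree_coef j * tree_coef (n - j)))
      with ((tree_coef j * y ^ (j - 1)) * (tree_coef (n - j) * y ^ (n - j - 1)))
      by (replace (n - 2)%nat with ((j - 1) + (n - j - 1))%nat by lia; rewrite pow_add; ring).
    apply Rmult_le_compat; assumption.
Qed.

(** * Domination of the coefficients: 0 <= C_n <= b_n C_2^(n-1)

    By induction on n, both bounds follow from the comparison principle,
    b_n C_2^(n-1) being a supersolution of the equation for C_n. *)

Section Coefficients.

Variables (t0 t kap MB : R) (B Gam : R -> R) (c : nat -> R) (C : nat -> R -> R).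
Hypothesis hB : forall s, t0 <= s <= t -> 0 <= B s <= MB.
Hypothesis hGam : forall s, t0 <= s <= t -> 0 <= Gam s.
Hypothesis hc : forall n, (2 <= n)%nat -> 0 <= c n <= kap * (INR n - 1).
Hypothesis hC1 : forall s, t0 <= s <= t -> C 1%nat s = 1.
Hypothesis hCinit : forall n, (2 <= n)%nat -> C n t0 = 0.
Hypothesis hCode : forall n s, (2 <= n)%nat -> t0 <= s <= t ->
  derivable_pt_lim (C n) s
    (c n * B s * C n s + INR n * Gam s / 2 * sum_f 1 (n - 1) (fun j => C j s * C (n - j)%nat s)).
Hypothesis hC2ode : forall s, t0 <= s <= t ->
  derivable_pt_lim (C 2%nat) s (kap * B s * C 2%nat s + Gam s).
Hypothesis hC2 : forall s, t0 <= s <= t -> 0 <= C 2%nat s.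

(* The algebraic core: with Q the quadratic term of the equation for C_n,
   d = b_n C2^(n-1) - C_n satisfies d' >= c_n B d. *)
Lemma majorant_inequality n x Q : (3 <= n)%nat -> t0 <= x <= t ->
  0 <= Q <= C 2%nat x ^ (n - 2) * sum_f 1 (n - 1) (fun j => tree_coef j * tree_coef (n - j)) ->
  c n * B x * (tree_coef n * C 2%nat x ^ (n - 1) - C n x)
  <= tree_coef n * (INR (n - 1) * C 2%nat x ^ pred (n - 1) * (kap * B x * C 2%nat x + Gam x))
     - (c n * B x * C n x + INR n * Gam x / 2 * Q).
Proof.
  intros Hn Hx [HQ0 HQ].
  replace (pred (n - 1)) with (n - 2)%nat by lia.
  replace (n - 1)%nat with (S (n - 2)) by lia. rewrite S_INR, <- tech_pow_Rmult.
  replace (INR (n - 2) + 1) with (INR n - 1) by (rewrite minus_INR by lia; simpl; ring).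
  set (P := C 2%nat x ^ (n - 2)) in *.
  set (Sb := sum_f 1 (n - 1) (fun j => tree_coef j * tree_coef (n - j))) in *.
  assert (HP : 0 <= P) by (apply pow_le, hC2, Hx).
  pose proof (tree_coef_rec_mult n ltac:(lia)) as Hrec. fold Sb in Hrec.
  pose proof (hB x Hx). pose proof (hGam x Hx). pose proof (hC2 x Hx).
  pose proof (tree_coef_nonneg n). destruct (hc n ltac:(lia)) as [Hc1 Hc2].
  assert (HnR : 3 <= INR n) by (replace 3 with (INR 3) by (simpl; ring); apply le_INR, Hn).
  (* the difference is B b_n C2 P (kap (n-1) - c_n) + Gam (b_n (n-1) P - n Q / 2) *)
  assert (T1 : 0 <= B x * (tree_coef n * (C 2%nat x * P)) * (kap * (INR n - 1) - c n)).
  { apply Rmult_le_pos; [|lra]. apply Rmult_le_pos; [lra|]. apply Rmult_le_pos; [lra|]. nra. }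
  assert (T2 : 0 <= Gam x * (INR n / 2) * (P * Sb - Q)).
  { apply Rmult_le_pos; [apply Rmult_le_pos; lra|lra]. }
  assert (E : tree_coef n * ((INR n - 1) * P) = INR n / 2 * Sb * P) by (rewrite <- Hrec; ring).
  nra.
Qed.

Lemma coefficient_bound n : (1 <= n)%nat -> forall s, t0 <= s <= t ->
  0 <= C n s <= tree_coef n * C 2%nat s ^ (n - 1).
Proof.
  induction n as [n IH] using lt_wf_ind. intros Hn s Hs.
  destruct n as [|[|[|m]]]; [lia| | |].
  - rewrite hC1, tree_coef_1 by exact Hs. simpl. lra.
  - rewrite tree_coef_2. simpl. pose proof (hC2 s Hs). lra.
  - set (n := S (S (S m))).
    set (Q := fun x => sum_f 1 (n - 1) (fun j => C j x * C (n - j)%nat x)).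
    assert (HQ : forall x, t0 <= x <= t ->
      0 <= Q x <= C 2%nat x ^ (n - 2) * sum_f 1 (n - 1) (fun j => tree_coef j * tree_coef (n - j))).
    { intros x Hx. apply quadratic_sum_bound; [unfold n; lia|].
      intros j Hj. apply IH; [unfold n in *; lia|lia|exact Hx]. }
    destruct (hc n ltac:(unfold n; lia)) as [Hc0 _].
    assert (HA : forall x, t0 <= x <= t -> c n * B x <= c n * MB)
      by (intros x Hx; apply Rmult_le_compat_l; [exact Hc0|apply hB, Hx]).
    split.
    + (* C_n' >= c_n B C_n since the quadratic term is nonnegative *)
      apply (linear_comparison (C n) _ (fun x => c n * B x) t0 t (c n * MB)
               (fun x Hx => hCode n x ltac:(unfold n; lia) Hx) HA); [| |exact Hs].
      * intros x Hx. destruct (HQ x Hx) as [HQ0 _]. pose proof (hGam x Hx).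
        assert (0 <= INR n * Gam x / 2 * Q x)
          by (apply Rmult_le_pos; [|exact HQ0]; pose proof (pos_INR n); apply Rmult_le_pos; [apply Rmult_le_pos|]; lra).
        unfold Q in H0. lra.
      * rewrite hCinit by (unfold n; lia). lra.
    +
      assert (Hd : forall x, t0 <= x <= t ->
        derivable_pt_lim (fun y => tree_coef n * C 2%nat y ^ (n - 1) - C n y) x
          (tree_coef n * (INR (n - 1) * C 2%nat x ^ pred (n - 1) * (kap * B x * C 2%nat x + Gam x))
           - (c n * B x * C n x + INR n * Gam x / 2 * Q x))).
      { intros x Hx. apply derivable_pt_lim_minus; [apply derivable_pt_lim_scal|].
        - exact (derivable_pt_lim_comp (C 2%nat) (fun y => y ^ (n - 1)) x _ _ (hC2ode x Hx)
                   (derivable_pt_lim_pow (C 2%nat x) (n - 1))).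
        - apply hCode; [unfold n; lia|exact Hx]. }
      assert (0 <= tree_coef n * C 2%nat s ^ (n - 1) - C n s); [|lra].
      apply (linear_comparison _ _ (fun x => c n * B x) t0 t (c n * MB) Hd HA); [| |exact Hs].
      * intros x Hx. apply majorant_inequality; [unfold n; lia|exact Hx|apply HQ, Hx].
      * rewrite (hCinit n), (hCinit 2%nat) by (unfold n; lia).
        replace (n - 1)%nat with (S (n - 2)) by (unfold n; lia). simpl. lra.
Qed.

End Coefficients.

(** * Partial sums of the tree function and the Lambert W bound

    The tree recursion gives the truncated
    differential inequality T_K' <= T_K (T_K + x T_K') (for the full series,
    T = exp(x T) gives equality), hence T_K(x) exp(-x T_K(x)) <= 1. When
    e x < 1 this forces x T_K(x) <= 1, and monotonicity of u exp(-u) on [0,1]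
    yields x T_K(x) <= -W(-x). *)

Fixpoint sum_lt (f : nat -> R) (n : nat) : R :=
  match n with O => 0 | S m => sum_lt f m + f m end.

Lemma sum_lt_ext f g n : (forall i, (i < n)%nat -> f i = g i) -> sum_lt f n = sum_lt g n.
Proof.
  induction n; intros H; simpl; [reflexivity|].
  rewrite IHn by (intros; apply H; lia). rewrite H by lia. reflexivity.
Qed.

Lemma sum_lt_plus f g n : sum_lt (fun i => f i + g i) n = sum_lt f n + sum_lt g n.
Proof. induction n; simpl; [ring|rewrite IHn; ring]. Qed.

Lemma sum_lt_scal c f n : c * sum_lt f n = sum_lt (fun i => c * f i) n.
Proof. induction n; simpl; [ring|rewrite <- IHn; ring]. Qed.

Lemma sum_lt_le f g n : (forall i, (i < n)%nat -> f i <= g i) -> sum_lt f n <= sum_lt g n.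
Proof.
  induction n; intros H; simpl; [lra|].
  pose proof (IHn ltac:(intros; apply H; lia)). pose proof (H n ltac:(lia)). lra.
Qed.

Lemma sum_lt_mono f m n : (m <= n)%nat -> (forall i, 0 <= f i) -> sum_lt f m <= sum_lt f n.
Proof. intros Hmn H. induction Hmn; [lra|]. simpl. pose proof (H m0). lra. Qed.

Lemma sum_lt_shift f n : sum_lt f (S n) = f 0%nat + sum_lt (fun i => f (S i)) n.
Proof. induction n; simpl in *; [ring|]. rewrite IHn. ring. Qed.

Lemma sum_lt_rev f n : sum_lt f n = sum_lt (fun i => f (n - 1 - i)%nat) n.
Proof.
  induction n; [reflexivity|].
  rewrite (sum_lt_shift (fun i => f (S n - 1 - i)%nat) n).
  change (sum_lt f (S n)) with (sum_lt f n + f n). rewrite IHn.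
  replace (S n - 1 - 0)%nat with n by lia.
  rewrite (sum_lt_ext (fun i => f (S n - 1 - S i)%nat) (fun i => f (n - 1 - i)%nat)); [ring|].
  intros i Hi. f_equal. lia.
Qed.

Lemma sum_f_R0_sum_lt f N : sum_f_R0 f N = sum_lt f (S N).
Proof. induction N; simpl; [ring|]. simpl in IHN. rewrite IHN. reflexivity. Qed.

Lemma sum_f_sum_lt (n : nat) F : (2 <= n)%nat -> sum_f 1 (n - 1) F = sum_lt (fun i => F (S i)) (n - 1).
Proof.
  intros Hn. unfold sum_f. rewrite sum_f_R0_sum_lt. replace (S (n - 1 - 1)) with (n - 1)%nat by lia.
  apply sum_lt_ext. intros i _. f_equal. lia.
Qed.

Lemma tree_coef_weighted_rec m : (1 <= m)%nat ->
  INR m * tree_coef (S m) = sum_lt (fun i => INR (S i) * tree_coef (S i) * tree_coef (m - i)%nat) m.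
Proof.
  intros Hm. pose proof (tree_coef_rec_mult (S m) ltac:(lia)) as H.
  rewrite sum_f_sum_lt in H by lia. replace (S m - 1)%nat with m in H by lia.
  rewrite S_INR in H. replace (INR m + 1 - 1) with (INR m) in H by ring.
  rewrite H.
  set (X := sum_lt (fun i => INR (S i) * tree_coef (S i) * tree_coef (m - i)%nat) m).
  (* reversing the order of summation turns the weight i+1 into m-i *)
  assert (HX : X = sum_lt (fun i => (INR m - INR i) * tree_coef (m - i)%nat * tree_coef (S i)) m).
  { unfold X. rewrite sum_lt_rev. apply sum_lt_ext. intros i Hi.
    replace (S (m - 1 - i)) with (m - i)%nat by lia.
    replace (m - (m - 1 - i))%nat with (S i) by lia.
    rewrite minus_INR by lia. ring. }
  assert (H2 : 2 * X = (INR m + 1) * sum_lt (fun j => tree_coef (S j) * tree_coef (S m - S j)%nat) m).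
  { replace (2 * X) with (X + X) by ring. rewrite HX at 2. unfold X. rewrite <- sum_lt_plus.
    rewrite sum_lt_scal. apply sum_lt_ext. intros i Hi. rewrite S_INR.
    replace (S m - S i)%nat with (m - i)%nat by lia. ring. }
  lra.
Qed.

Lemma convolution_inequality (g : nat -> R) K : (forall i, 0 <= g i) ->
  (forall m, INR m * g m = sum_lt (fun i => INR (S i) * g i * g (m - 1 - i)%nat) m) ->
  sum_lt (fun m => INR m * g m) K <= sum_lt (fun i => INR (S i) * g i) K * sum_lt g K.
Proof.
  intros Hg Hrel.
  set (Q := fun K => sum_lt (fun i => INR (S i) * g i * sum_lt g (K - 1 - i)%nat) K).
  assert (HPQ : forall K, sum_lt (fun m => INR m * g m) K = Q K).
  { induction K0 as [|K0 IH]; [reflexivity|].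
    simpl sum_lt at 1. rewrite IH. unfold Q. simpl sum_lt at 2.
    replace (S K0 - 1 - K0)%nat with 0%nat by lia. simpl sum_lt at 3.
    rewrite Hrel.
    rewrite (sum_lt_ext (fun i => INR (S i) * g i * sum_lt g (S K0 - 1 - i)%nat)
      (fun i => INR (S i) * g i * sum_lt g (K0 - 1 - i)%nat + INR (S i) * g i * g (K0 - 1 - i)%nat)).
    - rewrite sum_lt_plus. replace (K0 - 0 - K0)%nat with 0%nat by lia. simpl sum_lt. ring.
    - intros i Hi. replace (S K0 - 1 - i)%nat with (S (K0 - 1 - i)) by lia. simpl. ring. }
  rewrite HPQ. unfold Q. rewrite Rmult_comm, sum_lt_scal.
  apply sum_lt_le. intros i Hi.
  replace (sum_lt g K * (INR (S i) * g i)) with (INR (S i) * g i * sum_lt g K) by ring.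
  apply Rmult_le_compat_l; [apply Rmult_le_pos; [apply pos_INR|apply Hg]|].
  apply sum_lt_mono; [lia|exact Hg].
Qed.

Definition tree_partial (K : nat) (y : R) : R := sum_lt (fun m => tree_coef (S m) * y ^ m) K.
Definition tree_partial' (K : nat) (y : R) : R :=
  sum_lt (fun m => tree_coef (S m) * (INR m * y ^ pred m)) K.

Lemma tree_partial_derive K y : derivable_pt_lim (tree_partial K) y (tree_partial' K y).
Proof.
  unfold tree_partial, tree_partial'. induction K as [|K IH]; simpl.
  - apply derivable_pt_lim_const.
  - apply (derivable_pt_lim_plus (fun y => sum_lt (fun m => tree_coef (S m) * y ^ m) K)
                                 (fun y => tree_coef (S K) * y ^ K)); [exact IH|].
    apply derivable_pt_lim_scal, derivable_pt_lim_pow.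
Qed.

Lemma tree_partial_0 K : (1 <= K)%nat -> tree_partial K 0 = 1.
Proof.
  intros HK. induction K as [|K IH]; [lia|].
  destruct K as [|K]; [unfold tree_partial; simpl; rewrite tree_coef_1; ring|].
  change (tree_partial (S (S K)) 0) with (tree_partial (S K) 0 + tree_coef (S (S K)) * 0 ^ (S K)).
  rewrite IH by lia. rewrite pow_i by lia. ring.
Qed.

(* Truncated form of T' = T (T + x T'): weighted recursion plus the convolution inequality. *)
Lemma tree_partial_differential_inequality K y : 0 < y ->
  tree_partial' K y <= tree_partial K y * (tree_partial K y + y * tree_partial' K y).
Proof.
  intros Hy.
  set (g := fun m => tree_coef (S m) * y ^ (S m)).
  assert (Hg : forall i, 0 <= g i)
    by (intros i; apply Rmult_le_pos; [apply tree_coef_nonneg|apply pow_le; lra]).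
  assert (Hrel : forall m, INR m * g m = sum_lt (fun i => INR (S i) * g i * g (m - 1 - i)%nat) m).
  { intros [|m]; [simpl; ring|].
    unfold g. rewrite <- Rmult_assoc, (tree_coef_weighted_rec (S m)) by lia.
    rewrite Rmult_comm, sum_lt_scal. apply sum_lt_ext. intros i Hi.
    replace (S (S m - 1 - i)) with (S m - i)%nat by lia.
    replace (S (S m)) with (S i + (S m - i))%nat at 1 by lia. rewrite pow_add. ring. }
  pose proof (convolution_inequality g K Hg Hrel) as HC.
  assert (E1 : sum_lt g K = y * tree_partial K y).
  { unfold tree_partial. rewrite sum_lt_scal. apply sum_lt_ext. intros i _. unfold g. simpl. ring. }
  assert (E2 : sum_lt (fun m => INR m * g m) K = y ^ 2 * tree_partial' K y).
  { unfold tree_partial'. rewrite sum_lt_scal. apply sum_lt_ext. intros [|i] _; unfold g; simpl; ring. }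
  assert (E3 : sum_lt (fun i => INR (S i) * g i) K = y ^ 2 * tree_partial' K y + y * tree_partial K y).
  { rewrite <- E1, <- E2, <- sum_lt_plus. apply sum_lt_ext. intros i _. rewrite S_INR. ring. }
  rewrite E1, E2, E3 in HC.
  apply (Rmult_le_reg_l (y ^ 2)); [apply pow_lt; lra|].
  replace (y ^ 2 * (tree_partial K y * (tree_partial K y + y * tree_partial' K y)))
    with ((y ^ 2 * tree_partial' K y + y * tree_partial K y) * (y * tree_partial K y)) by ring.
  exact HC.
Qed.

(* T_K(y) exp(-y T_K(y)) <= 1: the function is 1 at 0 and nonincreasing. *)
Lemma tree_partial_exp_bound K y : (1 <= K)%nat -> 0 <= y ->
  tree_partial K y * exp (- (y * tree_partial K y)) <= 1.
Proof.
  intros HK Hy.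
  set (T := tree_partial K). set (T' := tree_partial' K).
  set (psi := fun y => T y * exp (- (y * T y))).
  set (psi' := fun y => T' y * exp (- (y * T y)) + T y * (exp (- (y * T y)) * - (1 * T y + y * T' y))).
  assert (Hd : forall c, derivable_pt_lim psi c (psi' c)).
  { intros c. apply (derivable_pt_lim_mult T (fun y => exp (- (y * T y)))); [apply tree_partial_derive|].
    pose proof (derivable_pt_lim_opp _ _ _
      (derivable_pt_lim_mult id T c _ _ (derivable_pt_lim_id c) (tree_partial_derive K c))) as H1.
    exact (derivable_pt_lim_comp _ exp c _ _ H1 (derivable_pt_lim_exp _)). }
  assert (Hpsi0 : psi 0 = 1).
  { unfold psi, T. rewrite tree_partial_0 by exact HK. rewrite Rmult_0_l, Ropp_0, exp_0. ring. }
  destruct (Rle_lt_or_eq_dec 0 y Hy) as [Hy'|<-]; [|fold (psi 0); lra].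
  destruct (MVT_cor2 psi psi' 0 y Hy') as [c [Hm Hc]]; [intros c _; apply Hd|].
  assert (Hneg : psi' c <= 0).
  { unfold psi'. pose proof (tree_partial_differential_inequality K c (proj1 Hc)).
    pose proof (exp_pos (- (c * T c))). fold T T' in H. nra. }
  fold (psi y). assert (psi' c * (y - 0) <= 0) by nra.
  lra.
Qed.

(* If e x < 1 then x T_K(x) <= 1: at a first crossing x1 of the level 1,
   the exponential bound would give T_K(x1) <= e, i.e. x1 >= 1/e > x. *)
Lemma tree_partial_scaled_le_1 K x : (1 <= K)%nat -> 0 <= x -> exp 1 * x < 1 ->
  x * tree_partial K x <= 1.
Proof.
  intros HK Hx He.
  destruct (Rle_or_lt (x * tree_partial K x) 1) as [H|H]; [exact H|exfalso].
  set (f := fun y => y * tree_partial K y - 1).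
  assert (Hcont : continuity f).
  { intros y. apply derivable_continuous_pt.
    exists (1 * tree_partial K y + y * tree_partial' K y - 0).
    apply derivable_pt_lim_minus; [|apply derivable_pt_lim_const].
    apply (derivable_pt_lim_mult id (tree_partial K)); [apply derivable_pt_lim_id|apply tree_partial_derive]. }
  assert (Hx0 : 0 < x) by (destruct (Rle_lt_or_eq_dec 0 x Hx) as [H1|<-]; [exact H1|lra]).
  destruct (IVT f 0 x Hcont Hx0) as [x1 [Hx1 Hf]]; [unfold f; lra|unfold f; lra|].
  unfold f in Hf.
  pose proof (tree_partial_exp_bound K x1 HK (proj1 Hx1)) as Hp.
  replace (x1 * tree_partial K x1) with 1 in Hp by lra.
  rewrite exp_Ropp in Hp. pose proof (exp_pos 1).
  assert (tree_partial K x1 <= exp 1).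
  { apply (Rmult_le_reg_r (/ exp 1)); [apply Rinv_0_lt_compat; lra|]. rewrite Rinv_r by lra. exact Hp. }
  assert (x1 * tree_partial K x1 <= x1 * exp 1) by (apply Rmult_le_compat_l; lra).
  assert (x1 * exp 1 <= x * exp 1) by (apply Rmult_le_compat_r; lra).
  lra.
Qed.

Lemma tree_partial_le_e K x : (1 <= K)%nat -> 0 <= x -> exp 1 * x < 1 -> tree_partial K x <= exp 1.
Proof.
  intros HK Hx He.
  pose proof (tree_partial_exp_bound K x HK Hx) as Hp.
  pose proof (tree_partial_scaled_le_1 K x HK Hx He) as H1.
  set (T := tree_partial K x) in *.
  pose proof (exp_pos (x * T)).
  assert (T <= exp (x * T)).
  { apply (Rmult_le_reg_r (/ exp (x * T))); [apply Rinv_0_lt_compat; lra|].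
    rewrite Rinv_r by lra. rewrite <- exp_Ropp. exact Hp. }
  assert (exp (x * T) <= exp 1) by (apply exp_le, H1).
  lra.
Qed.

Lemma xexp_neg_increasing u T : 0 <= T -> T < u -> u <= 1 -> T * exp (- T) < u * exp (- u).
Proof.
  intros HT HTu Hu.
  destruct (MVT_cor2 (fun v => v * exp (- v)) (fun v => 1 * exp (- v) + v * (exp (- v) * - 1)) T u HTu)
    as [c [Hm Hc]].
  { intros c _.
    apply (derivable_pt_lim_mult id (fun v => exp (- v))); [apply derivable_pt_lim_id|].
    exact (derivable_pt_lim_comp _ exp c _ _ (derivable_pt_lim_opp _ _ _ (derivable_pt_lim_id c))
             (derivable_pt_lim_exp _)). }
  pose proof (exp_pos (- c)).
  assert (0 < (1 * exp (- c) + c * (exp (- c) * - 1)) * (u - T)).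
  { apply Rmult_lt_0_compat; [|lra].
    replace (1 * exp (- c) + c * (exp (- c) * - 1)) with ((1 - c) * exp (- c)) by ring.
    apply Rmult_lt_0_compat; lra. }
  lra.
Qed.

Lemma tree_partial_le_lambertW K x w : (1 <= K)%nat -> 0 < x -> exp 1 * x < 1 ->
  is_LambertW0 (- x) w -> tree_partial K x <= - 1 / x * w.
Proof.
  intros HK Hx He [Hw1 Hw].
  pose proof (tree_partial_scaled_le_1 K x HK (Rlt_le _ _ Hx) He) as Hu1.
  pose proof (tree_partial_exp_bound K x HK (Rlt_le _ _ Hx)) as Hp.
  pose proof (exp_pos w).
  assert (Hwn : w < 0).
  { destruct (Rle_or_lt 0 w) as [H0|H0]; [|exact H0].
    assert (0 <= w * exp w) by (apply Rmult_le_pos; lra). lra. }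
  (* with u = x T_K(x): u exp(-u) <= x = (-w) exp(w), and u <= 1 *)
  assert (Hux : x * tree_partial K x * exp (- (x * tree_partial K x)) <= x).
  { rewrite Rmult_assoc. pose proof (Rmult_le_compat_l x _ _ (Rlt_le _ _ Hx) Hp). lra. }
  assert (Hu : x * tree_partial K x <= - w).
  { destruct (Rle_or_lt (x * tree_partial K x) (- w)) as [H0|H0]; [exact H0|exfalso].
    pose proof (xexp_neg_increasing (x * tree_partial K x) (- w) ltac:(lra) H0 Hu1).
    rewrite Ropp_involutive in H1. lra. }
  replace (- 1 / x * w) with (- w / x) by (field; lra).
  apply (Rmult_le_reg_l x); [exact Hx|]. replace (x * (- w / x)) with (- w) by (field; lra).
  exact Hu.
Qed.

Lemma lim_le (u : nat -> R) l M : Un_cv u l -> (forall n, u n <= M) -> l <= M.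
Proof.
  intros Hcv Hu. destruct (Rle_or_lt l M) as [H|H]; [exact H|exfalso].
  destruct (Hcv (l - M) ltac:(lra)) as [N HN]. specialize (HN N (le_n N)).
  unfold R_dist in HN. apply Rabs_def2 in HN. specialize (Hu N). lra.
Qed.

Lemma tree_dominated_series (a : nat -> R) x : 0 <= x -> exp 1 * x < 1 ->
  (forall m, 0 <= a m <= tree_coef (S m) * x ^ m) ->
  exists l, infinite_sum a l /\ (x = 0 -> l <= 1) /\
    (0 < x -> forall w, is_LambertW0 (- x) w -> l <= - 1 / x * w).
Proof.
  intros Hx He Ha.
  set (PS := fun N => sum_f_R0 a N).
  assert (HPS : forall N, PS N <= tree_partial (S N) x).
  { intros N. unfold PS, tree_partial. rewrite sum_f_R0_sum_lt.
    apply sum_lt_le. intros i _. apply Ha. }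
  assert (Hgrow : Un_growing PS).
  { intros N. unfold PS. simpl. pose proof (Ha (S N)). lra. }
  assert (Hub : has_ub PS).
  { exists (exp 1). intros y [N ->]. pose proof (HPS N).
    pose proof (tree_partial_le_e (S N) x ltac:(lia) Hx He). lra. }
  destruct (growing_cv PS Hgrow Hub) as [l Hl].
  exists l. split; [exact Hl|]. split.
  - intros ->. apply (lim_le PS l _ Hl). intros N. pose proof (HPS N).
    rewrite tree_partial_0 in H by lia. exact H.
  - intros Hx0 w Hw. apply (lim_le PS l _ Hl). intros N.
    pose proof (tree_partial_le_lambertW (S N) x w ltac:(lia) Hx0 He Hw). pose proof (HPS N). lra.
Qed.

Lemma tree_majorized_series (a : nat -> R) (tau z : R) : 0 < tau -> 0 <= z -> exp 1 * z * tau < 1 ->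
  (forall n, (1 <= n)%nat -> 0 <= a n <= tree_coef n * tau ^ (n - 1)) ->
  exists Theta, infinite_sum (fun m => a (S m) * z ^ m) Theta /\ (z = 0 -> Theta <= 1) /\
    (0 < z -> forall w, is_LambertW0 (- (tau * z)) w -> Theta <= - 1 / (tau * z) * w).
Proof.
  intros Htau Hz Hez Ha.
  assert (Hterm : forall m, 0 <= a (S m) * z ^ m <= tree_coef (S m) * (tau * z) ^ m).
  { intros m. destruct (Ha (S m) ltac:(lia)) as [Hlo Hhi].
    replace (S m - 1)%nat with m in Hhi by lia.
    pose proof (pow_le z m Hz).
    rewrite Rpow_mult_distr, <- Rmult_assoc.
    split; [apply Rmult_le_pos|apply Rmult_le_compat_r]; assumption. }
  destruct (tree_dominated_series _ (tau * z) ltac:(nra) ltac:(lra) Hterm)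
    as [Theta [Hsum [Hzero HW]]].
  exists Theta. split; [exact Hsum|split].
  - intros ->. apply Hzero. ring.
  - intros Hzp. apply HW. nra.
Qed.

Lemma lin_coef_bounds k n : (1 <= k)%nat -> (2 <= n)%nat ->
  0 <= lin_coef k n <= (INR k + 1) / INR k * (INR n - 1).
Proof.
  intros Hk Hn. unfold lin_coef.
  assert (HkR : 1 <= INR k) by (apply (le_INR 1), Hk).
  assert (HnR : 2 <= INR n) by (apply (le_INR 2), Hn).
  assert (Hkap : 0 < (INR k + 1) / INR k) by (apply Rdiv_lt_0_compat; lra).
  destruct (Nat.leb_spec n k) as [H|H].
  - split; [apply Rmult_le_pos; lra|lra].
  - split; [lra|].
    assert (Hnk : INR k + 1 <= INR n) by (rewrite <- S_INR; apply le_INR; lia).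
    apply (Rmult_le_reg_l (INR k)); [lra|].
    replace (INR k * ((INR k + 1) / INR k * (INR n - 1))) with ((INR k + 1) * (INR n - 1))
      by (field; lra).
    nra.
Qed.

Lemma lin_coef_2 k : (1 <= k)%nat -> lin_coef k 2 = (INR k + 1) / INR k.
Proof.
  intros Hk. unfold lin_coef.
  destruct (Nat.leb_spec 2 k) as [H|H].
  - assert (0 < INR k) by (apply lt_0_INR; lia). simpl. field. lra.
  - replace k with 1%nat by lia. simpl. field.
Qed.

(* For n = 2 the quadratic term of the coefficient equation is C_1^2 = 1. *)
Lemma coefficient_ode_two (c : nat -> R) (B Gam : R -> R) (C : nat -> R -> R) t0 t :
  (forall s, t0 <= s <= t -> C 1%nat s = 1) ->
  (forall n s, (2 <= n)%nat -> t0 <= s <= t -> derivable_pt_lim (C n) s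
    (c n * B s * C n s + INR n * Gam s / 2 * sum_f 1 (n - 1) (fun j => C j s * C (n - j)%nat s))) ->
  forall s, t0 <= s <= t -> derivable_pt_lim (C 2%nat) s (c 2%nat * B s * C 2%nat s + Gam s).
Proof.
  intros hC1 hCode s Hs.
  replace (c 2%nat * B s * C 2%nat s + Gam s) with
    (c 2%nat * B s * C 2%nat s + INR 2 * Gam s / 2
      * sum_f 1 (2 - 1) (fun j => C j s * C (2 - j)%nat s)).
  - apply hCode; [lia|exact Hs].
  - unfold sum_f. simpl. rewrite hC1 by exact Hs. field.
Qed.

Lemma coefficients_at_t (t0 t kap tau : R) (B Gam Bint : R -> R) (c : nat -> R)
  (C : nat -> R -> R) :
  0 < t0 -> t0 < t -> 0 < kap ->
  (forall s, t0 <= s <= t -> 0 < B s) ->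
  (forall s, Gam s = PI / 2 * s ^ 2 * B s) ->
  c 2%nat = kap ->
  (forall n, (2 <= n)%nat -> 0 <= c n <= kap * (INR n - 1)) ->
  (forall s, t0 <= s <= t -> C 1%nat s = 1) ->
  (forall n, (2 <= n)%nat -> C n t0 = 0) ->
  (forall n s, (2 <= n)%nat -> t0 <= s <= t -> derivable_pt_lim (C n) s
    (c n * B s * C n s + INR n * Gam s / 2 * sum_f 1 (n - 1) (fun j => C j s * C (n - j)%nat s))) ->
  (forall s, t0 <= s <= t -> RInt_is B s t (Bint s)) ->
  RInt_is (fun s => Gam s * exp (kap * Bint s)) t0 t tau ->
  0 < tau /\ forall n, (1 <= n)%nat -> 0 <= C n t <= tree_coef n * tau ^ (n - 1).
Proof.
  intros ht0 ht hkap hB hGam hc2 hc hC1 hCinit hCode hBint htau.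
  (* B is bounded above, being Riemann integrable on [t0, t] *)
  destruct (hBint t0 ltac:(lra)) as [prB _].
  destruct (Riemann_integrable_bound _ _ _ prB) as [MB HMB].
  rewrite Rmin_left, Rmax_right in HMB by lra.
  assert (HC2ode : forall s, t0 <= s <= t ->
    derivable_pt_lim (C 2%nat) s (kap * B s * C 2%nat s + Gam s))
    by (rewrite <- hc2; exact (coefficient_ode_two c B Gam C t0 t hC1 hCode)).
  pose proof (hCinit 2%nat ltac:(lia)) as HC2init.
  pose proof (second_coefficient_nonneg t0 t kap MB B Gam (C 2%nat) hkap hB HMB
                hGam HC2init HC2ode) as HC2.
  assert (Htau : tau = C 2%nat t).
  { apply (second_coefficient_value t0 t kap MB B Gam (C 2%nat) ht0 ht hkap hB HMB hGam
             HC2init HC2ode Bint); [|apply RInt_is_is_RInt, htau].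
    intros s Hs. apply RInt_is_is_RInt, hBint, Hs. }
  split; [rewrite Htau; exact (second_coefficient_pos t0 t kap MB B Gam (C 2%nat) ht0 ht hkap
                                 hB HMB hGam HC2init HC2ode)|].
  intros n Hn. rewrite Htau.
  apply (coefficient_bound t0 t kap MB B Gam c C); try assumption; [| |lra].
  - intros s Hs. pose proof (hB s Hs). pose proof (HMB s Hs). lra.
  - intros s Hs. rewrite hGam. pose proof (hB s Hs). pose proof PI_RGT_0. pose proof (pow2_ge_0 s).
    apply Rmult_le_pos; [apply Rmult_le_pos|]; lra.
Qed.

Theorem proposition3p4
  (beta : R) (k : nat) (t0 t : R)
  (hbeta : 0 < beta) (hk : (1 <= k)%nat) (ht0 : 0 < t0) (ht : t0 < t)
  (K0 K1 K2 K3 g : R -> R)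
  (hK0 : is_BesselK0 K0)
  (hK1 : forall r, 0 < r -> derivable_pt_lim K0 r (K1 r))
  (hK2 : forall r, 0 < r -> derivable_pt_lim K1 r (K2 r))
  (hK3 : forall r, 0 < r -> derivable_pt_lim K2 r (K3 r))
  (hg : is_g K3 g)
  (C : nat -> R -> R)
  (hC1 : forall s, t0 <= s <= t -> C 1%nat s = 1)
  (hCinit : forall n, (2 <= n)%nat -> C n t0 = 0)
  (hCode : forall n s, (2 <= n)%nat -> t0 <= s <= t ->
     derivable_pt_lim (C n) s
       (lin_coef k n * (beta / 2 * g s) * C n s
        + INR n * (beta * PI / 4 * s ^ 2 * g s) / 2
          * sum_f 1 (n - 1) (fun j => C j s * C (n - j)%nat s)))
  (Bint : R -> R)
  (hBint : forall s, t0 <= s <= t -> RInt_is (fun u => beta / 2 * g u) s t (Bint s))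
  (tau : R)
  (htau : RInt_is (fun s => (beta * PI / 4 * s ^ 2 * g s)
                            * exp ((INR k + 1) / INR k * Bint s)) t0 t tau) :
  forall z, 0 <= z -> exp 1 * z * tau < 1 ->
    exists Theta,
      infinite_sum (fun m => C (S m) t * z ^ m) Theta /\
      (z = 0 -> Theta <= 1) /\
      (0 < z -> forall w, is_LambertW0 (- (tau * z)) w ->
         Theta <= -1 / (tau * z) * w).
Proof.
  intros z Hz Hez.
  set (kap := (INR k + 1) / INR k).
  assert (Hkap : 0 < kap) by (apply Rdiv_lt_0_compat; pose proof (le_INR 1 k hk); simpl in *; lra).
  assert (HB : forall s, t0 <= s <= t -> 0 < beta / 2 * g s).
  { intros s Hs. pose proof (g_pos K0 K1 K2 K3 hK0 hK1 hK2 hK3 g hg s ltac:(lra)). nra. }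
  destruct (coefficients_at_t t0 t kap tau (fun s => beta / 2 * g s)
              (fun s => beta * PI / 4 * s ^ 2 * g s) Bint (lin_coef k) C ht0 ht Hkap HB
              ltac:(intros s; cbv beta; field) (lin_coef_2 k hk) (fun n Hn => lin_coef_bounds k n hk Hn)
              hC1 hCinit hCode hBint htau) as [Htau Hcoef].
  exact (tree_majorized_series (fun n => C n t) tau z Htau Hz Hez Hcoef).
Qed.
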